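(* Let $A,B$ be idempotent $\Gamma$-graded rings and ${}_AP_B$, ${}_BQ_A$ graded bimodules unital on both sides, such that there is a graded Morita context $(A,B,P,Q,\mu,\nu)$ with surjective trace maps. Then: (1) ${}_AP$, ${}_BQ$, $Q_A$ and $P_B$ generate ${}_AA$, ${}_BB$, $A_A$, $B_B$ respectively. Hence ${}_AP/t_A(P)$, ${}_BQ/t_B(Q)$, $P_B/t_B(P)$ and $Q_A/t_A(Q)$ are graded generators of $A\text{-gr}$, $B\text{-gr}$, $\text{gr-}B$ and $\text{gr-}A$ respectively. (2) $\ker\mu$ and $\ker\nu$ are torsion graded bimodules. (3) The maps ${}_BQ_A\to B\cdot\mathrm{HOM}_A(P,A)$, $q\mapsto\langle -,q\rangle$; ${}_BQ_A\to\mathrm{HOM}_B(P,B)\cdot A$, $q\mapsto[q,-]$; ${}_AP_B\to A\cdot\mathrm{HOM}_B(Q,B)$, $p\mapsto[-,p]$; and ${}_AP_B\to\mathrm{HOM}_A(Q,A)\cdot B$, $p\mapsto\langle p,-\rangle$ are graded epimorphisms of degree $e$ of graded bimodules, whose kernels are, respectively, left $B$-torsion, right $A$-torsion, left $A$-torsion and right $B$-torsion. If in addition $A$, $B$, ${}_AP_B$ and ${}_BQ_A$ are all left and right torsion-free, then: (4) $Q\cong B\cdot\mathrm{HOM}_A(P,A)$, $Q\cong\mathrm{HOM}_B(P,B)\cdot A$, $P\cong A\cdot\mathrm{HOM}_B(Q,B)$ and $P\cong\mathrm{HOM}_A(Q,A)\cdot B$; (5) the context is non-degenerate.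
   Context: $\Gamma$ is a fixed multiplicative group with identity $e$. Rings are associative $\Gamma$-graded, not necessarily unital; $A$ is idempotent if $A^2=A$. A graded module is unital if $AM=M$ (right: $MA=M$); $t_A(M)=\{m: Am=0\}$ (right: $\{m:mA=0\}$); torsion-free means zero torsion part; a module is torsion if it equals its torsion part. $A\text{-gr}$ (resp. $\text{gr-}A$): unital torsion-free graded left (resp. right) $A$-modules with degree-preserving maps. Suspension $M(\sigma)_\tau=M_{\tau\sigma}$ (left), $M_{\sigma\tau}$ (right). Graded homs of degree $\sigma$: $f(M_\tau)\subseteq N_{\tau\sigma}$ (left), $f(M_\tau)\subseteq N_{\sigma\tau}$ (right); $\mathrm{HOM}$ = direct sum over degrees. Module structures: for ${}_RM_S$ and a graded left $R$-module $N$, $\mathrm{HOM}_R(M,N)$ is left $S$ via $(sf)(m)=f(ms)$, and if $N=R$ also right $R$ via $(fr)(m)=f(m)r$; for a graded right $S$-module $N$, $\mathrm{HOM}_S(M,N)$ is right $R$ via $(fr)(m)=f(rm)$, and if $N=S$ also left $S$ via $(sf)(m)=sf(m)$. $S\cdot H$, $H\cdot R$: finite sums $\sum s_ih_i$, $\sum h_ir_i$. A unital graded module $P$ generates a unital graded module $M$ if for every unital graded $N$ and nonzero degree-preserving $f:M\to N$ there are $\sigma\in\Gamma$ and degree-preserving $g:P(\sigma)\to M$ with $f\circ g\neq0$; a graded generator of $A\text{-gr}$ is an object generating every object (analogously on the right). A graded Morita context $(A,B,P,Q,\mu,\nu)$: idempotent graded rings $A,B$, graded bimodules ${}_AP_B$,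 ${}_BQ_A$ unital on both sides, degree-$e$ graded bimodule maps $\mu:P\otimes_BQ\to A$, $\langle p,q\rangle=\mu(p\otimes q)$, and $\nu:Q\otimes_AP\to B$, $[q,p]=\nu(q\otimes p)$, with $p'[q,p]=\langle p',q\rangle p$ and $q'\langle p,q\rangle=[q',p]q$. It is non-degenerate if $P,Q$ are torsion-free on both sides and the pairings are faithful: $\langle P,q\rangle=0\Rightarrow q=0$, $\langle p,Q\rangle=0\Rightarrow p=0$, $[Q,p]=0\Rightarrow p=0$, $[q,P]=0\Rightarrow q=0$. *)

(* Structures are given as plain
   data records (carrier + operations + grading) together with Prop-valued
   predicates stating the axioms; this lets us build quotient modules
   M / t(M) as data without proof obligations. *)
From Stdlib Require List.
From Stdlib Require Import ClassicalEpsilon.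
From mathcomp Require Import all_boot.


Set Implicit Arguments.
Unset Strict Implicit.
Unset Printing Implicit Defensive.

Record group := Group {
  gT :> Type;
  gmul : gT -> gT -> gT;
  gone : gT;
  ginv : gT -> gT;
  gmulA : forall x y z, gmul x (gmul y z) = gmul (gmul x y) z;
  gmul1x : forall x, gmul gone x = x;
  gmulx1 : forall x, gmul x gone = x;
  gmulVx : forall x, gmul (ginv x) x = gone;
  gmulxV : forall x, gmul x (ginv x) = gone }.

Record abgrp := AbGrp {
  ab :> Type;
  aadd : ab -> ab -> ab;
  azero : ab;
  aopp : ab -> ab }.
Arguments azero {a}.

Definition is_abgrp (M : abgrp) : Prop :=
  (forall x y z : M, aadd x (aadd y z) = aadd (aadd x y) z) /\
  (forall x y : M, aadd x y = aadd y x) /\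
  (forall x : M, aadd azero x = x) /\
  (forall x : M, aadd (aopp x) x = azero).

Definition asum (M : abgrp) (X : Type) (s : seq X) (F : X -> M) : M :=
  foldr (fun x acc => aadd (F x) acc) azero s.

(* comp s x  <->  x lies in the homogeneous component of degree s;
   M is the internal direct sum of its homogeneous components.        *)
Definition is_graded (G : group) (M : abgrp) (comp : G -> M -> Prop) : Prop :=
  (forall s, comp s azero) /\
  (forall s x y, comp s x -> comp s y -> comp s (aadd x y)) /\
  (forall s x, comp s x -> comp s (aopp x)) /\
  (forall x : M, exists (l : seq G) (f : G -> M),
      List.NoDup l /\ (forall s, comp s (f s)) /\ x = asum l f) /\
  (forall (l : seq G) (f : G -> M),
      List.NoDup l -> (forall s, comp s (f s)) -> asum l f = azero ->
      forall s, List.In s l -> f s = azero).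

Record gring (G : group) := GRing {
  rab :> abgrp;
  rmul : rab -> rab -> rab;
  rcomp : G -> rab -> Prop }.

Definition is_gring (G : group) (A : gring G) : Prop :=
  is_abgrp A /\
  (forall x y z : A, rmul x (rmul y z) = rmul (rmul x y) z) /\
  (forall x y z : A, rmul (aadd x y) z = aadd (rmul x z) (rmul y z)) /\
  (forall x y z : A, rmul x (aadd y z) = aadd (rmul x y) (rmul x z)) /\
  is_graded (@rcomp G A) /\
  (forall s t (a b : A), rcomp s a -> rcomp t b -> rcomp (gmul s t) (rmul a b)).

Definition idempotent (G : group) (A : gring G) : Prop :=
  forall a : A, exists l : seq (A * A), a = asum l (fun x => rmul x.1 x.2).

Section Modules.
Variable G : group.

Record lmod (A : gring G) := LMod {
  lab :> abgrp;
  lact : A -> lab -> lab;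
  lcomp : G -> lab -> Prop }.

Record rmod (A : gring G) := RMod {
  rmab :> abgrp;
  ract : rmab -> A -> rmab;
  rmcomp : G -> rmab -> Prop }.
Arguments lcomp {A} l _ _.
Arguments rmcomp {A} r _ _.


Definition is_lgmod (A : gring G) (M : lmod A) : Prop :=
  is_abgrp M /\
  (forall (a b : A) (m : M), lact (aadd a b) m = aadd (lact a m) (lact b m)) /\
  (forall (a : A) (m n : M), lact a (aadd m n) = aadd (lact a m) (lact a n)) /\
  (forall (a b : A) (m : M), lact (rmul a b) m = lact a (lact b m)) /\
  is_graded (lcomp M) /\
  (forall s t (a : A) (m : M), rcomp s a -> lcomp M t m -> lcomp M (gmul s t) (lact a m)).

Definition is_rgmod (A : gring G) (M : rmod A) : Prop :=
  is_abgrp M /\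
  (forall (m : M) (a b : A), ract m (aadd a b) = aadd (ract m a) (ract m b)) /\
  (forall (m n : M) (a : A), ract (aadd m n) a = aadd (ract m a) (ract n a)) /\
  (forall (m : M) (a b : A), ract m (rmul a b) = ract (ract m a) b) /\
  is_graded (rmcomp M) /\
  (forall s t (m : M) (a : A), rmcomp M t m -> rcomp s a -> rmcomp M (gmul t s) (ract m a)).

Definition lreg (A : gring G) : lmod A := @LMod A (rab A) (@rmul G A) (@rcomp G A).
Definition rreg (A : gring G) : rmod A := @RMod A (rab A) (@rmul G A) (@rcomp G A).

Definition lunital (A : gring G) (M : lmod A) : Prop :=
  forall m : M, exists l : seq (A * M), m = asum l (fun x => lact x.1 x.2).
Definition runital (A : gring G) (M : rmod A) : Prop :=
  forall m : M, exists l : seq (M * A), m = asum l (fun x => ract x.1 x.2).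

Definition ltors (A : gring G) (M : lmod A) (m : M) : Prop :=
  forall a : A, lact a m = azero.
Definition rtors (A : gring G) (M : rmod A) (m : M) : Prop :=
  forall a : A, ract m a = azero.


Arguments ltors {A} M m.
Arguments rtors {A} M m.

Definition ltfree (A : gring G) (M : lmod A) : Prop :=
  forall m : M, ltors M m -> m = azero.
Definition rtfree (A : gring G) (M : rmod A) : Prop :=
  forall m : M, rtors M m -> m = azero.

Definition ladditive (M N : abgrp) (f : M -> N) : Prop :=
  forall x y, f (aadd x y) = aadd (f x) (f y).

Definition lgr_map (A : gring G) (M N : lmod A) (f : M -> N) : Prop :=
  ladditive f /\ (forall (a : A) x, f (lact a x) = lact a (f x)) /\
  (forall t x, lcomp M t x -> lcomp N t (f x)).
Definition rgr_map (A : gring G) (M N : rmod A) (f : M -> N) : Prop :=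
  ladditive f /\ (forall x (a : A), f (ract x a) = ract (f x) a) /\
  (forall t x, rmcomp M t x -> rmcomp N t (f x)).

(* degree-preserving maps from the suspension P(s) to M, where
   P(s)_t = P_{ts} (left) and P(s)_t = P_{st} (right); the suspension has
   the same underlying module as P, only the grading is shifted. *)
Definition lgr_map_susp (A : gring G) (P M : lmod A) (s : G) (g : P -> M) : Prop :=
  ladditive g /\ (forall (a : A) x, g (lact a x) = lact a (g x)) /\
  (forall t x, lcomp P (gmul t s) x -> lcomp M t (g x)).
Definition rgr_map_susp (A : gring G) (P M : rmod A) (s : G) (g : P -> M) : Prop :=
  ladditive g /\ (forall x (a : A), g (ract x a) = ract (g x) a) /\
  (forall t x, rmcomp P (gmul s t) x -> rmcomp M t (g x)).

Definition lhom_deg (A : gring G) (M N : lmod A) (s : G) (f : M -> N) : Prop :=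
  ladditive f /\ (forall (a : A) x, f (lact a x) = lact a (f x)) /\
  (forall t x, lcomp M t x -> lcomp N (gmul t s) (f x)).
Definition rhom_deg (A : gring G) (M N : rmod A) (s : G) (f : M -> N) : Prop :=
  ladditive f /\ (forall x (a : A), f (ract x a) = ract (f x) a) /\
  (forall t x, rmcomp M t x -> rmcomp N (gmul s t) (f x)).

(* HOM = direct sum over degrees: finite sums of homogeneous homs *)
Definition lHOM (A : gring G) (M N : lmod A) (F : M -> N) : Prop :=
  exists l : seq (G * (M -> N)),
    (forall x, List.In x l -> lhom_deg x.1 x.2) /\
    F = (fun m => asum l (fun x => x.2 m)).
Definition rHOM (A : gring G) (M N : rmod A) (F : M -> N) : Prop :=
  exists l : seq (G * (M -> N)),
    (forall x, List.In x l -> rhom_deg x.1 x.2) /\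
    F = (fun m => asum l (fun x => x.2 m)).


Arguments lhom_deg {A} M N s f.
Arguments rhom_deg {A} M N s f.
Arguments lHOM {A} M N F.
Arguments rHOM {A} M N F.

Definition lgenerates (A : gring G) (P M : lmod A) : Prop :=
  forall N : lmod A, is_lgmod N -> lunital N ->
  forall f : M -> N, lgr_map f -> (exists x, f x <> azero) ->
  exists (s : G) (g : P -> M), lgr_map_susp s g /\ exists x, f (g x) <> azero.
Definition rgenerates (A : gring G) (P M : rmod A) : Prop :=
  forall N : rmod A, is_rgmod N -> runital N ->
  forall f : M -> N, rgr_map f -> (exists x, f x <> azero) ->
  exists (s : G) (g : P -> M), rgr_map_susp s g /\ exists x, f (g x) <> azero.

Definition lgr_obj (A : gring G) (M : lmod A) : Prop :=
  is_lgmod M /\ lunital M /\ ltfree M.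
Definition rgr_obj (A : gring G) (M : rmod A) : Prop :=
  is_rgmod M /\ runital M /\ rtfree M.
Definition lgr_generator (A : gring G) (P : lmod A) : Prop :=
  lgr_obj P /\ forall M : lmod A, lgr_obj M -> lgenerates P M.
Definition rgr_generator (A : gring G) (P : rmod A) : Prop :=
  rgr_obj P /\ forall M : rmod A, rgr_obj M -> rgenerates P M.

(* Quotients M / t(M): elements are the cosets m + t(M).             *)
Definition lcoset (A : gring G) (M : lmod A) (m : M) : M -> Prop :=
  fun y => ltors M (aadd m (aopp y)).
Definition lqcar (A : gring G) (M : lmod A) : Type :=
  {X : M -> Prop | exists m, X = lcoset m}.
Definition lq_of (A : gring G) (M : lmod A) (m : M) : lqcar M :=
  exist _ (lcoset m) (ex_intro _ m erefl).
Definition lq_rep (A : gring G) (M : lmod A) (X : lqcar M) : M :=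
  proj1_sig (constructive_indefinite_description _ (proj2_sig X)).
Definition lquot (A : gring G) (M : lmod A) : lmod A :=
  @LMod A (AbGrp (fun X Y => lq_of (aadd (lq_rep X) (lq_rep Y)))
              (lq_of (azero : M))
              (fun X => lq_of (aopp (lq_rep X))))
       (fun a X => lq_of (lact a (lq_rep X)))
       (fun s X => exists m, lcomp M s m /\ X = lq_of m).

Definition rcoset (A : gring G) (M : rmod A) (m : M) : M -> Prop :=
  fun y => rtors M (aadd m (aopp y)).
Definition rqcar (A : gring G) (M : rmod A) : Type :=
  {X : M -> Prop | exists m, X = rcoset m}.
Definition rq_of (A : gring G) (M : rmod A) (m : M) : rqcar M :=
  exist _ (rcoset m) (ex_intro _ m erefl).
Definition rq_rep (A : gring G) (M : rmod A) (X : rqcar M) : M :=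
  proj1_sig (constructive_indefinite_description _ (proj2_sig X)).
Definition rquot (A : gring G) (M : rmod A) : rmod A :=
  @RMod A (AbGrp (fun X Y => rq_of (aadd (rq_rep X) (rq_rep Y)))
              (rq_of (azero : M))
              (fun X => rq_of (aopp (rq_rep X))))
       (fun X a => rq_of (ract (rq_rep X) a))
       (fun s X => exists m, rmcomp M s m /\ X = rq_of m).

Record bimod (A B : gring G) := BiMod {
  bab :> abgrp;
  blact : A -> bab -> bab;
  bract : bab -> B -> bab;
  bcomp : G -> bab -> Prop }.
Arguments bcomp {A B} b _ _.

Definition bimod_l (A B : gring G) (M : bimod A B) : lmod A :=
  @LMod A (bab M) (@blact A B M) (bcomp M).
Definition bimod_r (A B : gring G) (M : bimod A B) : rmod B :=
  @RMod B (bab M) (@bract A B M) (bcomp M).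

Definition is_gbimod (A B : gring G) (M : bimod A B) : Prop :=
  is_lgmod (bimod_l M) /\ is_rgmod (bimod_r M) /\
  (forall (a : A) (m : M) (b : B), bract (blact a m) b = blact a (bract m b)).

(* The degree-e bimodule maps
   mu : P (x)_B Q -> A and nu : Q (x)_A P -> B are given, via the universal
   property of the tensor product, by balanced biadditive pairings
   mu p q = <p,q>,  nu q p = [q,p].                                    *)
Definition is_gmorita (A B : gring G) (P : bimod A B) (Q : bimod B A)
    (mu : P -> Q -> A) (nu : Q -> P -> B) : Prop :=
  [/\ is_gring A /\ is_gring B /\ idempotent A /\ idempotent B,
      is_gbimod P /\ is_gbimod Q /\
      lunital (bimod_l P) /\ runital (bimod_r P) /\
      lunital (bimod_l Q) /\ runital (bimod_r Q),
      (forall p p' q, mu (aadd p p') q = aadd (mu p q) (mu p' q)) /\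
      (forall p q q', mu p (aadd q q') = aadd (mu p q) (mu p q')) /\
      (forall p (b : B) q, mu (bract p b) q = mu p (blact b q)) /\
      (forall (a : A) p q, mu (blact a p) q = rmul a (mu p q)) /\
      (forall p q (a : A), mu p (bract q a) = rmul (mu p q) a) /\
      (forall s t p q, bcomp P s p -> bcomp Q t q -> rcomp (gmul s t) (mu p q)),
      (forall q q' p, nu (aadd q q') p = aadd (nu q p) (nu q' p)) /\
      (forall q p p', nu q (aadd p p') = aadd (nu q p) (nu q p')) /\
      (forall q (a : A) p, nu (bract q a) p = nu q (blact a p)) /\
      (forall (b : B) q p, nu (blact b q) p = rmul b (nu q p)) /\
      (forall q p (b : B), nu q (bract p b) = rmul (nu q p) b) /\
      (forall s t q p, bcomp Q s q -> bcomp P t p -> rcomp (gmul s t) (nu q p))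
    & (forall p' q p, bract p' (nu q p) = blact (mu p' q) p) /\
      (forall q' p q, bract q' (mu p q) = blact (nu q' p) q) ].

Definition mu_surj (A B : gring G) (P : bimod A B) (Q : bimod B A)
    (mu : P -> Q -> A) : Prop :=
  forall a : A, exists l : seq (P * Q), a = asum l (fun x => mu x.1 x.2).
Definition nu_surj (A B : gring G) (P : bimod A B) (Q : bimod B A)
    (nu : Q -> P -> B) : Prop :=
  forall b : B, exists l : seq (Q * P), b = asum l (fun x => nu x.1 x.2).

(* An element  sum_i m_i (x) n_i  of M (x)_R N (M right R-module, N left
   R-module), given by the list l of pairs, is zero in the tensor product,
   i.e. it is killed by every R-balanced biadditive map into an abelian
   group (universal property of M (x)_R N). *)
Definition tensor_zero (R S T : gring G) (M : bimod S R) (N : bimod R T)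
    (l : seq (M * N)) : Prop :=
  forall (Z : abgrp) (f : M -> N -> Z), is_abgrp Z ->
    (forall m m' n, f (aadd m m') n = aadd (f m n) (f m' n)) ->
    (forall m n n', f m (aadd n n') = aadd (f m n) (f m n')) ->
    (forall m (r : R) n, f (bract m r) n = f m (blact r n)) ->
    asum l (fun x => f x.1 x.2) = azero.

Definition ker_mu_torsion (A B : gring G) (P : bimod A B) (Q : bimod B A)
    (mu : P -> Q -> A) : Prop :=
  forall l : seq (P * Q), asum l (fun x => mu x.1 x.2) = azero ->
    (forall a : A, tensor_zero [seq (blact a x.1, x.2) | x <- l]) /\
    (forall a : A, tensor_zero [seq (x.1, bract x.2 a) | x <- l]).
Definition ker_nu_torsion (A B : gring G) (P : bimod A B) (Q : bimod B A)
    (nu : Q -> P -> B) : Prop :=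
  forall l : seq (Q * P), asum l (fun x => nu x.1 x.2) = azero ->
    (forall b : B, tensor_zero [seq (blact b x.1, x.2) | x <- l]) /\
    (forall b : B, tensor_zero [seq (x.1, bract x.2 b) | x <- l]).

(* For M = _R M _S :
   S . HOM_R(M,R)  (left S-action (s f)(m) = f(m s), right R-action
                    (f r)(m) = f(m) r)                                 *)
Definition SHOM (R S : gring G) (M : bimod R S) (F : M -> R) : Prop :=
  exists l : seq (S * (M -> R)),
    (forall x, List.In x l -> lHOM (bimod_l M) (lreg R) x.2) /\
    F = (fun m => asum l (fun x => x.2 (bract m x.1))).
(* HOM_S(M,S) . R  (right R-action (f r)(m) = f(r m), left S-action
                    (s f)(m) = s f(m))                                 *)
Definition HOMR (R S : gring G) (M : bimod R S) (F : M -> S) : Prop :=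
  exists l : seq ((M -> S) * R),
    (forall x, List.In x l -> rHOM (bimod_r M) (rreg S) x.1) /\
    F = (fun m => asum l (fun x => x.1 (blact x.2 m))).

Definition SHOM_epi (R S : gring G) (M : bimod R S) (N : bimod S R)
    (phi : N -> M -> R) : Prop :=
  [/\ forall n, SHOM (phi n),
      forall F, SHOM F -> exists n, phi n = F,
      forall n n', phi (aadd n n') = (fun m => aadd (phi n m) (phi n' m)),
      (forall (s : S) n, phi (blact s n) = (fun m => phi n (bract m s))) /\
      (forall n (r : R), phi (bract n r) = (fun m => rmul (phi n m) r))
    & forall t n, bcomp N t n -> lhom_deg (bimod_l M) (lreg R) t (phi n)].
Definition HOMR_epi (R S : gring G) (M : bimod R S) (N : bimod S R)
    (phi : N -> M -> S) : Prop :=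
  [/\ forall n, HOMR (phi n),
      forall F, HOMR F -> exists n, phi n = F,
      forall n n', phi (aadd n n') = (fun m => aadd (phi n m) (phi n' m)),
      (forall (s : S) n, phi (blact s n) = (fun m => rmul s (phi n m))) /\
      (forall n (r : R), phi (bract n r) = (fun m => phi n (blact r m)))
    & forall t n, bcomp N t n -> rhom_deg (bimod_r M) (rreg S) t (phi n)].

Definition SHOM_iso (R S : gring G) (M : bimod R S) (N : bimod S R)
    (phi : N -> M -> R) : Prop :=
  SHOM_epi phi /\ injective phi /\
  (forall t F, SHOM F -> lhom_deg (bimod_l M) (lreg R) t F ->
     exists n, bcomp N t n /\ phi n = F).
Definition HOMR_iso (R S : gring G) (M : bimod R S) (N : bimod S R)
    (phi : N -> M -> S) : Prop :=
  HOMR_epi phi /\ injective phi /\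
  (forall t F, HOMR F -> rhom_deg (bimod_r M) (rreg S) t F ->
     exists n, bcomp N t n /\ phi n = F).

Definition nondegenerate (A B : gring G) (P : bimod A B) (Q : bimod B A)
    (mu : P -> Q -> A) (nu : Q -> P -> B) : Prop :=
  [/\ ltfree (bimod_l P) /\ rtfree (bimod_r P) /\
      ltfree (bimod_l Q) /\ rtfree (bimod_r Q),
      forall q, (forall p, mu p q = azero) -> q = azero,
      forall p, (forall q, mu p q = azero) -> p = azero,
      forall p, (forall q, nu q p = azero) -> p = azero
    & forall q, (forall p, nu q p = azero) -> q = azero].

End Modules.

Arguments lcomp {G A} l _ _.
Arguments rmcomp {G A} r _ _.
Arguments ltors {G A} M m.
Arguments rtors {G A} M m.
Arguments lhom_deg {G A} M N s f.
Arguments rhom_deg {G A} M N s f.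
Arguments lHOM {G A} M N F.
Arguments rHOM {G A} M N F.
Arguments bcomp {G A B} b _ _.

(* Surjectivity of <-,-> writes every a in A as a finite sum of traces <p_i,q_i>;
   splitting each q_i into homogeneous components exhibits a as a sum of values of
   homogeneous homomorphisms <-,q> : P -> A.  So the graded trace ideal of P is all
   of A, and P generates every unital graded module; a generating map into a
   torsion-free module kills t(P), so P/t(P) is a graded generator.  The identities
   p'[q,p] = <p',q>p and q'<p,q> = [q',p]q make the kernels torsion (an element a of A,
   expanded as a sum of traces, carries sum p_i (x) q_i to a multiple of sum <p_i,q_i>),
   show that every element of B.HOM_A(P,A) is some <-,q> and that <-,q> = 0 forces
   Bq = 0.  Degrees of q are read off <-,q> by uniqueness of homogeneous
   decompositions.  Right-handed generation reduces to left-handed generation over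
   opposite rings, and each statement about Q is the statement about P for the
   context with (A,P,<,>) and (B,Q,[,]) exchanged. *)

From Pilot Require Import Defs.
From mathcomp Require Import all_boot.
From Stdlib Require FinFun.
From Stdlib Require Import ClassicalEpsilon FunctionalExtensionality.
From Stdlib Require Import PropExtensionality ProofIrrelevance.

Set Implicit Arguments.
Unset Strict Implicit.
Unset Printing Implicit Defensive.

Existing Class is_abgrp.

Section AbelianGroup.
Context {M : abgrp} {HM : is_abgrp M}.

Lemma addA (x y z : M) : aadd x (aadd y z) = aadd (aadd x y) z.
Proof. by case: HM. Qed.
Lemma addC (x y : M) : aadd x y = aadd y x.
Proof. by case: HM => _ []. Qed.
Lemma add0x (x : M) : aadd azero x = x.
Proof. by case: HM => _ [] _ []. Qed.
Lemma addNx (x : M) : aadd (aopp x) x = azero.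
Proof. by case: HM => _ [] _ []. Qed.
Lemma addx0 (x : M) : aadd x azero = x.
Proof. by rewrite addC add0x. Qed.
Lemma addxN (x : M) : aadd x (aopp x) = azero.
Proof. by rewrite addC addNx. Qed.
Lemma addI (x y z : M) : aadd x y = aadd x z -> y = z.
Proof. by move/(f_equal (aadd (aopp x))); rewrite !addA addNx !add0x. Qed.
Lemma add_eq0 (x y : M) : aadd x y = azero -> y = aopp x.
Proof. by move=> Exy; apply: (@addI x); rewrite Exy addxN. Qed.
Lemma oppK (x : M) : aopp (aopp x) = x.
Proof. by apply/esym/add_eq0; rewrite addNx. Qed.
Lemma opp0 : aopp (azero : M) = azero.
Proof. by apply/esym/add_eq0; rewrite add0x. Qed.
Lemma oppD (x y : M) : aopp (aadd x y) = aadd (aopp x) (aopp y).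
Proof.
by apply/esym/add_eq0; rewrite (addC (aopp x)) addA -(addA x) addxN addx0 addxN.
Qed.
Lemma sub0_eq (x y : M) : aadd x (aopp y) = azero -> x = y.
Proof. by move=> Exy; rewrite -(oppK x) -(add_eq0 Exy) oppK. Qed.
Lemma subK (x y : M) : aadd (aadd x (aopp y)) y = x.
Proof. by rewrite -addA addNx addx0. Qed.
Lemma subx0 (x : M) : aadd x (aopp azero) = x.
Proof. by rewrite opp0 addx0. Qed.
Lemma sub_trans (x y z : M) :
  aadd x (aopp z) = aadd (aadd x (aopp y)) (aadd y (aopp z)).
Proof. by rewrite -addA (addA (aopp y)) addNx add0x. Qed.
Lemma subDD (a b c d : M) :
  aadd (aadd a b) (aopp (aadd c d)) = aadd (aadd a (aopp c)) (aadd b (aopp d)).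
Proof. by rewrite oppD -!addA; congr aadd; rewrite !addA; congr aadd; apply: addC. Qed.

Lemma asum_cons X (x : X) (l : seq X) (F : X -> M) :
  asum (x :: l) F = aadd (F x) (asum l F).
Proof. by []. Qed.
Lemma asum_cat X (l1 l2 : seq X) (F : X -> M) :
  asum (l1 ++ l2) F = aadd (asum l1 F) (asum l2 F).
Proof. by elim: l1 => [|x l IH] /=; rewrite ?add0x // IH addA. Qed.
Lemma asum_map X Y (g : X -> Y) (l : seq X) (F : Y -> M) :
  asum (map g l) F = asum l (fun x => F (g x)).
Proof. by elim: l => [|x l IH] //=; rewrite IH. Qed.
Lemma asumD X (l : seq X) (F H : X -> M) :
  asum l (fun x => aadd (F x) (H x)) = aadd (asum l F) (asum l H).
Proof.
elim: l => [|x l IH] /=; first by rewrite add0x.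
by rewrite IH -!addA; congr aadd; rewrite !addA; congr aadd; apply: addC.
Qed.
Lemma asumN X (l : seq X) (F : X -> M) :
  asum l (fun x => aopp (F x)) = aopp (asum l F).
Proof. by elim: l => [|x l IH] /=; rewrite ?opp0 // IH oppD. Qed.
Lemma eq_asum X (l : seq X) (F H : X -> M) :
  (forall x, List.In x l -> F x = H x) -> asum l F = asum l H.
Proof.
elim: l => [|x l IH] //= E; rewrite E; last by left.
by rewrite IH // => y Hy; apply: E; right.
Qed.
Lemma asum_eq0 X (l : seq X) (F : X -> M) :
  (forall x, List.In x l -> F x = azero) -> asum l F = azero.
Proof. by move=> E; rewrite (eq_asum E); elim: l {E} => //= x l ->; rewrite add0x. Qed.
Lemma asum_neq0 X (l : seq X) (F : X -> M) :
  asum l F <> azero -> exists2 x, List.In x l & F x <> azero.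
Proof.
move=> Hl; apply: NNPP => Hno; apply: Hl; apply: asum_eq0 => x Hx.
by apply: NNPP => Fx; apply: Hno; exists x.
Qed.
Lemma exchange_asum X Y (l1 : seq X) (l2 : seq Y) (F : X -> Y -> M) :
  asum l1 (fun x => asum l2 (F x)) = asum l2 (fun y => asum l1 (fun x => F x y)).
Proof.
elim: l1 => [|x l IH] /=; last by rewrite IH -asumD.
by rewrite asum_eq0.
Qed.
End AbelianGroup.

Section Additive.
Context {M N : abgrp} {HM : is_abgrp M} {HN : is_abgrp N}.
Variable f : M -> N.
Hypothesis f_add : ladditive f.

Lemma additive0 : f azero = azero.
Proof. by apply: (@addI _ _ (f azero)); rewrite -f_add !addx0. Qed.
Lemma additiveN x : f (aopp x) = aopp (f x).
Proof. by apply: add_eq0; rewrite -f_add addxN additive0. Qed.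
Lemma additive_asum X (l : seq X) (F : X -> M) :
  f (asum l F) = asum l (fun x => f (F x)).
Proof. by elim: l => [|x l IH] /=; rewrite ?additive0 // f_add IH. Qed.
End Additive.

Lemma ladditive_asum (M N : abgrp) {HN : is_abgrp N} X (l : seq X) (F : X -> M -> N) :
  (forall x, List.In x l -> ladditive (F x)) ->
  ladditive (fun m => asum l (fun x => F x m)).
Proof.
move=> Fadd m m'; rewrite -asumD; apply: eq_asum => x Hx; exact: Fadd.
Qed.

Section GroupLemmas.
Context {G : group}.
Lemma gmulKg (d : G) : cancel (gmul d) (gmul (ginv d)).
Proof. by move=> s; rewrite gmulA gmulVx gmul1x. Qed.
Lemma gmulKVg (d : G) : cancel (gmul (ginv d)) (gmul d).
Proof. by move=> s; rewrite gmulA gmulxV gmul1x. Qed.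
Lemma gmulgK (d : G) : cancel (fun s => gmul s d) (fun s => gmul s (ginv d)).
Proof. by move=> s; rewrite -gmulA gmulxV gmulx1. Qed.
Lemma gmulgKV (d : G) : cancel (fun s => gmul s (ginv d)) (fun s => gmul s d).
Proof. by move=> s; rewrite -gmulA gmulVx gmulx1. Qed.
End GroupLemmas.

(* The grading group has no decidable equality; decide it classically. *)
Definition geq (G : group) (x y : G) : bool :=
  if excluded_middle_informative (x = y) then true else false.
Lemma geqP (G : group) (x y : G) : reflect (x = y) (geq x y).
Proof. by rewrite /geq; case: excluded_middle_informative => H; constructor. Qed.

Section Graded.
Context {G : group} {M : abgrp} {HM : is_abgrp M} (comp : G -> M -> Prop).
Hypothesis gradedM : is_graded comp.

Lemma comp0 s : comp s azero.
Proof. by case: gradedM. Qed.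
Lemma compD s x y : comp s x -> comp s y -> comp s (aadd x y).
Proof. by case: gradedM => _ [H] _; apply: H. Qed.
Lemma compN s x : comp s x -> comp s (aopp x).
Proof. by case: gradedM => _ [] _ [H] _; apply: H. Qed.
Lemma graded_decomp (x : M) : exists (l : seq G) (f : G -> M),
  [/\ List.NoDup l, forall s, comp s (f s) & x = asum l f].
Proof. by case: gradedM => _ [] _ [] _ [] /(_ x) [l [f [? []]]]; exists l, f. Qed.
Lemma graded_decomp_uniq (l : seq G) (f : G -> M) :
  List.NoDup l -> (forall s, comp s (f s)) -> asum l f = azero ->
  forall s, List.In s l -> f s = azero.
Proof. by case: gradedM => _ [] _ [] _ [] _; apply. Qed.

Lemma graded_decomp_at (x : M) (t : G) : exists (l : seq G) (f : G -> M),
  [/\ List.NoDup l, List.In t l, forall s, comp s (f s) & x = asum l f].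
Proof.
have [l [f [ND Hf ->]]] := graded_decomp x.
case: (classic (List.In t l)) => Ht; first by exists l, f.
exists (t :: l), (fun s => if geq s t then azero else f s); split => //.
- by constructor.
- by left.
- by move=> s; case: geq => //; apply: comp0.
rewrite /= ifT ?add0x; last exact/geqP.
by apply: eq_asum => s Hs; case: geqP => // E; subst s.
Qed.

Lemma graded_decomp_uniq_reindex (l : seq G) (h : G -> M) (k kinv : G -> G) :
  cancel k kinv -> cancel kinv k ->
  List.NoDup l -> (forall s, comp (k s) (h s)) -> asum l h = azero ->
  forall s, List.In s l -> h s = azero.
Proof.
move=> kK kinvK ND Hh E s Hs.
have NDk : List.NoDup (map k l).
  by apply: FinFun.Injective_map_NoDup => //; apply: can_inj kK.
have := @graded_decomp_uniq (map k l) (fun d => h (kinv d)) NDk.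
rewrite asum_map; under [asum _ _]eq_asum do rewrite kK.
move=> /(_ _ E (k s)); rewrite kK; apply; last exact: List.in_map.
by move=> d; rewrite -{1}(kinvK d).
Qed.

Lemma asum_delta (l : seq G) t (v : M) : List.NoDup l -> List.In t l ->
  asum l (fun s => if geq s t then v else azero) = v.
Proof.
elim: l => [|s l IH] //= /List.NoDup_cons_iff [Hs ND] [<-|Ht].
  rewrite ifT ?asum_eq0 ?addx0 //; last exact/geqP.
  by move=> s' Hs'; case: geqP => // E; subst s'.
by case: geqP => [E|_]; [subst s | rewrite add0x IH].
Qed.

Lemma additive_component (N : abgrp) {HN : is_abgrp N} (ncomp : G -> N -> Prop) (g : N -> M)
    (k kinv : G -> G) : cancel k kinv -> cancel kinv k -> ladditive g ->
  (forall c y, ncomp c y -> comp (k c) (g y)) ->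
  forall y t (l : seq G) (f : G -> N), List.NoDup l -> List.In t l ->
  (forall c, ncomp c (f c)) -> y = asum l f -> comp (k t) (g y) -> g (f t) = g y.
Proof.
move=> kK kinvK g_add g_comp y t l f ND Ht Hf Ey Hgy.
pose h c := aadd (g (f c)) (aopp (if geq c t then g y else azero)).
suff: h t = azero by rewrite /h ifT; [apply: sub0_eq | apply/geqP].
apply: (graded_decomp_uniq_reindex kK kinvK ND) => // [c|].
  apply: compD; first exact: g_comp.
  by apply: compN; case: geqP => [->|_]; last exact: comp0.
rewrite /h asumD asumN asum_delta // -(additive_asum g_add) -Ey; exact: addxN.
Qed.
End Graded.

Existing Class is_gring.
Existing Class is_lgmod.
Existing Class is_rgmod.
Existing Class is_gbimod.

Section Ring.
Context {G : group} {A : gring G} {HA : is_gring A}.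
#[local] Instance gring_abgrp : is_abgrp A. Proof. by case: HA. Qed.
Lemma mulA (x y z : A) : rmul x (rmul y z) = rmul (rmul x y) z.
Proof. by case: HA => _ []. Qed.
Lemma mulDl (x y z : A) : rmul (aadd x y) z = aadd (rmul x z) (rmul y z).
Proof. by case: HA => _ [] _ []. Qed.
Lemma mulDr (x y z : A) : rmul x (aadd y z) = aadd (rmul x y) (rmul x z).
Proof. by case: HA => _ [] _ [] _ []. Qed.
Lemma gring_graded : is_graded (@rcomp G A).
Proof. by case: HA => _ [] _ [] _ [] _ []. Qed.
Lemma rcompM s t (a b : A) : rcomp s a -> rcomp t b -> rcomp (gmul s t) (rmul a b).
Proof. by case: HA => _ [] _ [] _ [] _ [] _; apply. Qed.
End Ring.
#[export] Existing Instance gring_abgrp.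

Section LeftModule.
Context {G : group} {A : gring G} {HA : is_gring A} {M : lmod A} {HM : is_lgmod M}.
#[local] Instance lgmod_abgrp : is_abgrp M. Proof. by case: HM. Qed.
Lemma lactDl (a b : A) (m : M) : lact (aadd a b) m = aadd (lact a m) (lact b m).
Proof. by case: HM => _ []. Qed.
Lemma lactDr (a : A) (m n : M) : lact a (aadd m n) = aadd (lact a m) (lact a n).
Proof. by case: HM => _ [] _ []. Qed.
Lemma lactM (a b : A) (m : M) : lact (rmul a b) m = lact a (lact b m).
Proof. by case: HM => _ [] _ [] _ []. Qed.
Lemma lgmod_graded : is_graded (lcomp M).
Proof. by case: HM => _ [] _ [] _ [] _ []. Qed.
Lemma lcompM s t (a : A) (m : M) :
  rcomp s a -> lcomp M t m -> lcomp M (gmul s t) (lact a m).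
Proof. by case: HM => _ [] _ [] _ [] _ [] _; apply. Qed.
Lemma lact_additive (a : A) : ladditive (lact a : M -> M).
Proof. by move=> x y; apply: lactDr. Qed.
Lemma lact_additivel (m : M) : ladditive (fun a : A => lact a m).
Proof. by move=> x y; apply: lactDl. Qed.
Lemma lact0r (a : A) : lact a (azero : M) = azero.
Proof. exact: additive0 (lact_additive a). Qed.
Lemma lact0l (m : M) : lact (azero : A) m = azero.
Proof. exact: additive0 (lact_additivel m). Qed.
Lemma lactNr (a : A) (m : M) : lact a (aopp m) = aopp (lact a m).
Proof. exact: additiveN (lact_additive a) m. Qed.
Lemma lact_asumr X (l : seq X) (a : A) (F : X -> M) :
  lact a (asum l F) = asum l (fun x => lact a (F x)).
Proof. exact: (additive_asum (lact_additive a)). Qed.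
Lemma lact_asuml X (l : seq X) (m : M) (F : X -> A) :
  lact (asum l F) m = asum l (fun x => lact (F x) m).
Proof. exact: (additive_asum (lact_additivel m)). Qed.
End LeftModule.
#[export] Existing Instance lgmod_abgrp.

Section RightModule.
Context {G : group} {A : gring G} {HA : is_gring A} {M : rmod A} {HM : is_rgmod M}.
#[local] Instance rgmod_abgrp : is_abgrp M. Proof. by case: HM. Qed.
Lemma ractDr (m : M) (a b : A) : ract m (aadd a b) = aadd (ract m a) (ract m b).
Proof. by case: HM => _ []. Qed.
Lemma ractDl (m n : M) (a : A) : ract (aadd m n) a = aadd (ract m a) (ract n a).
Proof. by case: HM => _ [] _ []. Qed.
Lemma ractM (m : M) (a b : A) : ract m (rmul a b) = ract (ract m a) b.
Proof. by case: HM => _ [] _ [] _ []. Qed.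
Lemma rgmod_graded : is_graded (rmcomp M).
Proof. by case: HM => _ [] _ [] _ [] _ []. Qed.
Lemma rcompMm s t (m : M) (a : A) :
  rmcomp M t m -> rcomp s a -> rmcomp M (gmul t s) (ract m a).
Proof. by case: HM => _ [] _ [] _ [] _ [] _; apply. Qed.
Lemma ract_additive (a : A) : ladditive (fun m : M => ract m a).
Proof. by move=> x y; apply: ractDl. Qed.
Lemma ract_additiver (m : M) : ladditive (fun a : A => ract m a).
Proof. by move=> x y; apply: ractDr. Qed.
Lemma ract0r (m : M) : ract m (azero : A) = azero.
Proof. exact: additive0 (ract_additiver m). Qed.
Lemma ract_asuml X (l : seq X) (a : A) (F : X -> M) :
  ract (asum l F) a = asum l (fun x => ract (F x) a).
Proof. exact: (additive_asum (ract_additive a)). Qed.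
Lemma ract_asumr X (l : seq X) (m : M) (F : X -> A) :
  ract m (asum l F) = asum l (fun x => ract m (F x)).
Proof. exact: (additive_asum (ract_additiver m)). Qed.
End RightModule.
#[export] Existing Instance rgmod_abgrp.

Section Bimodule.
Context {G : group} {A B : gring G} {HA : is_gring A} {HB : is_gring B}
  {P : bimod A B} {HP : is_gbimod P}.
#[local] Instance bimod_lgmod : is_lgmod (bimod_l P). Proof. by case: HP. Qed.
#[local] Instance bimod_rgmod : is_rgmod (bimod_r P). Proof. by case: HP => _ []. Qed.
#[local] Instance bimod_abgrp : is_abgrp P. Proof. exact: (@lgmod_abgrp _ _ (bimod_l P)). Qed.
Lemma bimod_graded : is_graded (bcomp P).
Proof. exact: (lgmod_graded (M := bimod_l P)). Qed.
Lemma blact0l (m : P) : blact (azero : A) m = azero.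
Proof. exact: (lact0l (M := bimod_l P)). Qed.
Lemma bract0r (m : P) : bract m (azero : B) = azero.
Proof. exact: (ract0r (M := bimod_r P)). Qed.
Lemma blact_asuml X (l : seq X) (m : P) (F : X -> A) :
  blact (asum l F) m = asum l (fun x => blact (F x) m).
Proof. exact: (lact_asuml (M := bimod_l P)). Qed.
Lemma bract_asumr X (l : seq X) (m : P) (F : X -> B) :
  bract m (asum l F) = asum l (fun x => bract m (F x)).
Proof. exact: (ract_asumr (M := bimod_r P)). Qed.
End Bimodule.
#[export] Existing Instance bimod_lgmod.
#[export] Existing Instance bimod_rgmod.
#[export] Existing Instance bimod_abgrp.

Section TorsionQuotient.
Context {G : group} {A : gring G} {HA : is_gring A} {M : lmod A} {HM : is_lgmod M}.

Lemma ltors0 : ltors M azero.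
Proof. by move=> a; apply: lact0r. Qed.
Lemma ltorsD x y : ltors M x -> ltors M y -> ltors M (aadd x y).
Proof. by move=> Hx Hy a; rewrite lactDr Hx Hy add0x. Qed.
Lemma ltorsN x : ltors M x -> ltors M (aopp x).
Proof. by move=> Hx a; rewrite lactNr Hx opp0. Qed.
Lemma ltors_lact (b : A) x : ltors M x -> ltors M (lact b x).
Proof. by move=> Hx a; rewrite -lactM Hx. Qed.

Lemma lq_of_eq (x y : M) : lq_of x = lq_of y <-> ltors M (aadd x (aopp y)).
Proof.
split=> [/(f_equal (@proj1_sig _ _)) /= Exy | Hxy].
  have : lcoset y y by rewrite /lcoset addxN; apply: ltors0.
  by rewrite -Exy.
apply: eq_sig_hprop => [? ? ?|/=]; first exact: proof_irrelevance.
apply: functional_extensionality => z; apply: propositional_extensionality.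
rewrite /lcoset; split=> Hz.
  by rewrite (sub_trans y x z); apply: ltorsD => //; move: (ltorsN Hxy); rewrite oppD oppK addC.
by rewrite (sub_trans x y z); apply: ltorsD.
Qed.

Lemma lq_repK (X : lqcar M) : lq_of (lq_rep X) = X.
Proof.
apply: eq_sig_hprop => [? ? ?|/=]; first exact: proof_irrelevance.
by rewrite /lq_rep; case: constructive_indefinite_description => x /= ->.
Qed.
Lemma lq_of_surj (X : lqcar M) : exists x, X = lq_of x.
Proof. by exists (lq_rep X); rewrite lq_repK. Qed.
Lemma ltors_lq_rep_sub (x : M) : ltors M (aadd (lq_rep (lq_of x)) (aopp x)).
Proof. by apply/lq_of_eq; rewrite lq_repK. Qed.
Lemma lq_of_ltors (x : M) : ltors M x -> lq_of x = lq_of azero.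
Proof. by move=> Hx; apply/lq_of_eq; rewrite subx0. Qed.

Lemma lq_ofD (x y : M) : @aadd (lquot M) (lq_of x) (lq_of y) = lq_of (aadd x y).
Proof. by apply/lq_of_eq; rewrite subDD; apply: ltorsD; apply: ltors_lq_rep_sub. Qed.
Lemma lq_ofN (x : M) : @aopp (lquot M) (lq_of x) = lq_of (aopp x).
Proof. by apply/lq_of_eq; move: (ltorsN (ltors_lq_rep_sub x)); rewrite oppD. Qed.
Lemma lq_of_lact (a : A) (x : M) : @lact _ _ (lquot M) a (lq_of x) = lq_of (lact a x).
Proof. by apply/lq_of_eq; rewrite -lactNr -lactDr; apply/ltors_lact/ltors_lq_rep_sub. Qed.

#[local] Instance lquot_abgrp : is_abgrp (lquot M).
Proof.
split; [|split; [|split]].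
- move=> X Y Z; case: (lq_of_surj X) => x ->; case: (lq_of_surj Y) => y ->.
  by case: (lq_of_surj Z) => z ->; rewrite !lq_ofD addA.
- by move=> X Y; case: (lq_of_surj X) => x ->; case: (lq_of_surj Y) => y ->; rewrite !lq_ofD addC.
- by move=> X; case: (lq_of_surj X) => x ->; rewrite lq_ofD add0x.
- by move=> X; case: (lq_of_surj X) => x ->; rewrite lq_ofN lq_ofD addNx.
Qed.

Lemma lq_of_asum X (l : seq X) (F : X -> M) :
  asum (M := lquot M) l (fun y => lq_of (F y)) = lq_of (asum l F).
Proof. by elim: l => [|x l IH] //; rewrite asum_cons IH lq_ofD. Qed.

(* A homogeneous a shifts degrees injectively, so a x = 0 holds componentwise. *)
Lemma ltors_components (x : M) (l : seq G) (f : G -> M) :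
  ltors M x -> List.NoDup l -> (forall s, lcomp M s (f s)) -> x = asum l f ->
  forall s, List.In s l -> ltors M (f s).
Proof.
move=> Hx ND Hf Ex s Hs a.
have [la [fa [_ Hfa ->]]] := graded_decomp gring_graded a.
rewrite lact_asuml; apply: asum_eq0 => d _.
apply: (graded_decomp_uniq_reindex (h := fun s => lact (fa d) (f s)) lgmod_graded
  (gmulKg d) (gmulKVg d) ND) => //.
  by move=> s'; apply: lcompM.
by rewrite -lact_asumr -Ex.
Qed.

Lemma lquot_graded : is_graded (lcomp (lquot M)).
Proof.
split; [|split; [|split; [|split]]].
- by move=> s; exists azero; split => //; apply: comp0 lgmod_graded s.
- move=> s _ _ [x [Hx ->]] [y [Hy ->]]; exists (aadd x y).
  by split; [apply: compD lgmod_graded _ _ _ Hx Hy | rewrite lq_ofD].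
- move=> s _ [x [Hx ->]]; exists (aopp x).
  by split; [apply: compN lgmod_graded _ _ Hx | rewrite lq_ofN].
- move=> X; case: (lq_of_surj X) => x ->.
  have [l [f [ND Hf ->]]] := graded_decomp lgmod_graded x.
  exists l, (fun s => lq_of (f s)); split=> //; split; last by rewrite lq_of_asum.
  by move=> s; exists (f s).
- move=> l F ND HF EF s Hs.
  have [f Hf] : exists f : G -> M, forall s, lcomp M s (f s) /\ F s = lq_of (f s).
    by apply: (choice (fun s m => lcomp M s m /\ F s = lq_of m)) => s'; apply: HF.
  have Ef : asum (M := lquot M) l F = lq_of (asum l f).
    by rewrite -lq_of_asum; apply: eq_asum => s' _; apply: (Hf s').2.
  move: EF; rewrite Ef => /lq_of_eq; rewrite subx0 => Hsum.
  rewrite (Hf s).2; apply: lq_of_ltors.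
  by apply: (ltors_components Hsum ND) => // s'; apply: (Hf s').1.
Qed.

#[local] Instance lquot_lgmod : is_lgmod (lquot M).
Proof.
split; first exact: lquot_abgrp.
split; first by move=> a b X; case: (lq_of_surj X) => x ->; rewrite !lq_of_lact lq_ofD lactDl.
split.
  move=> a X Y; case: (lq_of_surj X) => x ->; case: (lq_of_surj Y) => y ->.
  by rewrite lq_ofD !lq_of_lact lq_ofD lactDr.
split; first by move=> a b X; case: (lq_of_surj X) => x ->; rewrite !lq_of_lact lactM.
split; first exact: lquot_graded.
move=> s t a _ Ha [x [Hx ->]]; exists (lact a x).
by split; [apply: lcompM | rewrite lq_of_lact].
Qed.

Lemma lquot_unital : lunital M -> lunital (lquot M).
Proof.
move=> M_unital X; case: (lq_of_surj X) => x ->; have [l ->] := M_unital x.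
exists (map (fun y => (y.1, lq_of y.2)) l).
by rewrite asum_map -lq_of_asum; apply: eq_asum => y _; rewrite lq_of_lact.
Qed.

(* A x <= t(M) gives A (A x) = 0, that is A x = 0 since A = A^2. *)
Lemma lquot_tfree : Defs.idempotent A -> ltfree (lquot M).
Proof.
move=> idemA X; case: (lq_of_surj X) => x -> Hx; apply: lq_of_ltors => c.
have [l ->] := idemA c; rewrite lact_asuml; apply: asum_eq0 => y _.
rewrite lactM; move: (Hx y.2); rewrite lq_of_lact => /lq_of_eq; rewrite subx0; apply.
Qed.
End TorsionQuotient.
#[export] Existing Instance lquot_abgrp.
#[export] Existing Instance lquot_lgmod.

Section GradedTrace.
Context {G : group} {A : gring G} {HA : is_gring A} (P : lmod A) {HP : is_lgmod P}.

Definition in_gr_trace (a : A) : Prop :=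
  exists l : seq (P * (G * (P -> A))),
    (forall x, List.In x l -> lhom_deg P (lreg A) x.2.1 x.2.2) /\
    a = asum l (fun x => x.2.2 x.1).

Lemma in_gr_trace_asum X (l : seq X) (F : X -> A) :
  (forall x, List.In x l -> in_gr_trace (F x)) -> in_gr_trace (asum l F).
Proof.
elim: l => [|x l IH] Hl; first by exists [::].
rewrite asum_cons.
have [l1 [H1 ->]] := Hl x (or_introl erefl).
have [l2 [H2 ->]] := IH (fun y Hy => Hl y (or_intror Hy)).
exists (l1 ++ l2); split; last by rewrite asum_cat.
by move=> y Hy; case: (List.in_app_or _ _ _ Hy); [apply: H1 | apply: H2].
Qed.

Hypothesis gr_trace_full : forall a : A, in_gr_trace a.

(* Write x = sum a_i m_i, expand a_i through the trace and m_i into components: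
   some summand h(p) m_d survives f, and p' |-> h(p') m_d is a homogeneous map P(s) -> M. *)
Lemma gr_trace_full_generates (M : lmod A) {HM : is_lgmod M} : lunital M ->
  forall (N : abgrp) {HN : is_abgrp N} (f : M -> N), ladditive f ->
  forall x, f x <> azero ->
  exists s (g : P -> M), lgr_map_susp s g /\ exists y, f (g y) <> azero.
Proof.
move=> M_unital N HN f f_add x fx_neq0.
have [l El] := M_unital x; rewrite El (additive_asum f_add) in fx_neq0.
have [[a m] _ Ham] := asum_neq0 fx_neq0.
have [lm [fm [_ Hfm Em]]] := graded_decomp lgmod_graded m.
rewrite /= Em lact_asumr (additive_asum f_add) in Ham.
have [d _ Hd] := asum_neq0 Ham.
have [la [Hla Ea]] := gr_trace_full a.
rewrite Ea lact_asuml (additive_asum f_add) in Hd.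
have [[p [c h]] Hin Hp] := asum_neq0 Hd.
have /= [h_add [h_lact h_comp]] := Hla _ Hin.
exists (ginv (gmul c d)), (fun p => lact (h p) (fm d)).
split; last by exists p.
split; [|split] => /=.
- by move=> y z; rewrite h_add lactDl.
- by move=> b y; rewrite h_lact lactM.
- move=> t y Hy; rewrite -[t in lcomp M t _](gmulgKV (gmul c d)) gmulA.
  exact: lcompM (h_comp _ _ Hy) (Hfm d).
Qed.

Lemma gr_trace_full_lgenerates (M : lmod A) {HM : is_lgmod M} :
  lunital M -> lgenerates P M.
Proof. by move=> M_unital N HN _ f [f_add _] [x Hx]; apply: gr_trace_full_generates Hx. Qed.

(* A generating map into a torsion-free module kills t(P), hence factors through P/t(P). *)
Lemma gr_trace_full_lgr_generator :
  Defs.idempotent A -> lunital P -> lgr_generator (lquot P).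
Proof.
move=> idemA P_unital; split.
  by split; [apply: lquot_lgmod | split; [apply: lquot_unital | apply: lquot_tfree]].
move=> M [HM [M_unital M_tfree]] N HN _ f [f_add _] [x Hx].
have [s [g [[g_add [g_lact g_comp]] [y Hy]]]] := gr_trace_full_generates M_unital f_add Hx.
have g_tors z : ltors P z -> g z = azero.
  by move=> Hz; apply: M_tfree => a; rewrite -g_lact Hz (additive0 g_add).
have g_rep z : g (lq_rep (lq_of z)) = g z.
  by rewrite -(subK (lq_rep (lq_of z)) z) g_add g_tors ?add0x //; apply: ltors_lq_rep_sub.
exists s, (fun X => g (lq_rep X)); split; last by exists (lq_of y); rewrite g_rep.
split; [|split].
- move=> X Y; case: (lq_of_surj X) => x1 ->; case: (lq_of_surj Y) => y1 ->.
  by rewrite lq_ofD !g_rep g_add.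
- by move=> a X; case: (lq_of_surj X) => x1 ->; rewrite lq_of_lact !g_rep g_lact.
- by move=> t _ [m [Hm ->]]; rewrite g_rep; apply: g_comp.
Qed.
End GradedTrace.

Section RegularModules.
Context {G : group} {A : gring G} {HA : is_gring A}.

#[local] Instance lreg_lgmod : is_lgmod (lreg A).
Proof.
split; first exact: gring_abgrp.
split; first by move=> *; apply: mulDl.
split; first by move=> *; apply: mulDr.
split; first by move=> * /=; rewrite mulA.
by split; [apply: gring_graded | move=> *; apply: rcompM].
Qed.
#[local] Instance rreg_rgmod : is_rgmod (rreg A).
Proof.
split; first exact: gring_abgrp.
split; first by move=> *; apply: mulDr.
split; first by move=> *; apply: mulDl.
split; first by move=> * /=; rewrite mulA.
by split; [apply: gring_graded | move=> *; apply: rcompM].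
Qed.
End RegularModules.
#[export] Existing Instance lreg_lgmod.
#[export] Existing Instance rreg_rgmod.

Section Opposite.
Context {G : group}.

Definition group_op : group.
refine (@Defs.Group (gT G) (fun x y => gmul y x) (@gone G) (@ginv G) _ _ _ _ _).
- by move=> x y z; rewrite gmulA.
- exact: gmulx1.
- exact: gmul1x.
- exact: gmulxV.
- exact: gmulVx.
Defined.

Definition gring_op (A : gring G) : gring group_op :=
  @Defs.GRing group_op (rab A) (fun x y => rmul y x) (@rcomp G A).
(* A right A-module is a left module over the opposite ring, with the opposite grading group. *)
Definition lmod_of_rmod (A : gring G) (M : rmod A) : lmod (gring_op A) :=
  @Defs.LMod group_op (gring_op A) (rmab M) (fun a m => ract m a) (rmcomp M).

Context {A : gring G} {HA : is_gring A}.

#[local] Instance gring_op_gring : is_gring (gring_op A).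
Proof.
split; first exact: (gring_abgrp (A := A)).
split; first by move=> x y z /=; rewrite mulA.
split; first by move=> x y z /=; rewrite mulDr.
split; first by move=> x y z /=; rewrite mulDl.
split; first exact: (gring_graded (A := A)).
by move=> s t a b Ha Hb /=; apply: rcompM.
Qed.

Lemma gring_op_idem : Defs.idempotent A -> Defs.idempotent (gring_op A).
Proof.
move=> idemA a; have [l ->] := idemA a.
by exists (map (fun x => (x.2, x.1)) l); rewrite asum_map.
Qed.

Context {M : rmod A}.

#[local] Instance lmod_of_rmod_lgmod {HM : is_rgmod M} : is_lgmod (lmod_of_rmod M).
Proof.
split; first exact: (rgmod_abgrp (M := M)).
split; first by move=> a b m /=; rewrite ractDr.
split; first by move=> a m n /=; rewrite ractDl.
split; first by move=> a b m /=; rewrite ractM.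
split; first exact: (rgmod_graded (M := M)).
by move=> s t a m Ha Hm /=; apply: rcompMm.
Qed.

Lemma rgmod_of_lmod : is_lgmod (lmod_of_rmod M) -> is_rgmod M.
Proof.
move=> HL; split; first exact: (lgmod_abgrp (M := lmod_of_rmod M)).
split; first by move=> m a b; apply: (lactDl (M := lmod_of_rmod M)).
split; first by move=> m n a; apply: (lactDr (M := lmod_of_rmod M)).
split; first by move=> m a b; apply: (lactM (M := lmod_of_rmod M)).
split; first exact: (lgmod_graded (M := lmod_of_rmod M)).
by move=> s t m a Hm Ha; apply: (lcompM (M := lmod_of_rmod M)).
Qed.

Lemma lmod_of_rmod_unital : runital M <-> lunital (lmod_of_rmod M).
Proof.
by split=> M_unital m; have [l ->] := M_unital m;
  exists (map (fun x => (x.2, x.1)) l); rewrite asum_map.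
Qed.
End Opposite.
#[export] Existing Instance gring_op_gring.
#[export] Existing Instance lmod_of_rmod_lgmod.

Section LeftToRight.
Context {G : group} {A : gring G} {HA : is_gring A}.

Lemma rgenerates_op (P M : rmod A) :
  lgenerates (lmod_of_rmod P) (lmod_of_rmod M) -> rgenerates P M.
Proof.
move=> Hgen N HN N_unital f [f_add [f_ract f_comp]] Hf.
have [s [g [[g_add [g_ract g_comp]] Hg]]] :=
  Hgen (lmod_of_rmod N) _ (proj1 lmod_of_rmod_unital N_unital) f
    (conj f_add (conj (fun a x => f_ract x a) f_comp)) Hf.
by exists s, g; split=> //; split; [|split] => // x a; apply: g_ract.
Qed.

Lemma rgr_generator_op (P : rmod A) :
  lgr_generator (lquot (lmod_of_rmod P)) -> rgr_generator (rquot P).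
Proof.
change (lgr_generator (lmod_of_rmod (rquot P)) -> rgr_generator (rquot P)).
move=> [[HL [L_unital L_tfree]] Hgen]; split.
  by split; [apply: rgmod_of_lmod | split; [apply/lmod_of_rmod_unital | apply: L_tfree]].
move=> M [HM [M_unital M_tfree]]; apply: rgenerates_op; apply: Hgen.
by split; [apply: lmod_of_rmod_lgmod | split; [apply/lmod_of_rmod_unital | apply: M_tfree]].
Qed.
End LeftToRight.

Lemma lHOM_linear {G : group} {A : gring G} {HA : is_gring A} (M N : lmod A)
    {HN : is_lgmod N} (F : M -> N) :
  lHOM M N F -> ladditive F /\ (forall a x, F (lact a x) = lact a (F x)).
Proof.
move=> [l [Hl ->]]; split; first by apply: ladditive_asum => x /Hl [].
by move=> a x; rewrite lact_asumr; apply: eq_asum => y /Hl [_ []].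
Qed.
Lemma rHOM_linear {G : group} {A : gring G} {HA : is_gring A} (M N : rmod A)
    {HN : is_rgmod N} (F : M -> N) :
  rHOM M N F -> ladditive F /\ (forall x a, F (ract x a) = ract (F x) a).
Proof.
move=> [l [Hl ->]]; split; first by apply: ladditive_asum => x /Hl [].
by move=> x a; rewrite ract_asuml; apply: eq_asum => y /Hl [_ []].
Qed.

Section MoritaContext.
Context {G : group} {A B : gring G} {P : bimod A B} {Q : bimod B A}
  (mu : P -> Q -> A) (nu : Q -> P -> B).
Hypothesis morita : is_gmorita mu nu.

#[local] Instance morita_gringA : is_gring A. Proof. by case: morita => [[]]. Qed.
#[local] Instance morita_gringB : is_gring B. Proof. by case: morita => [[? []]]. Qed.
#[local] Instance morita_bimodP : is_gbimod P. Proof. by case: morita => _ [[]]. Qed.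
#[local] Instance morita_bimodQ : is_gbimod Q. Proof. by case: morita => _ [? []]. Qed.
Lemma morita_idemA : Defs.idempotent A. Proof. by case: morita => [[? [? []]]]. Qed.
Lemma morita_lunitalP : lunital (bimod_l P). Proof. by case: morita => _ [? [? []]]. Qed.
Lemma morita_lunitalQ : lunital (bimod_l Q). Proof. by case: morita => _ [? [? [? [? []]]]]. Qed.
Lemma morita_runitalQ : runital (bimod_r Q). Proof. by case: morita => _ [? [? [? [? []]]]]. Qed.

Lemma mu_addl p p' q : mu (aadd p p') q = aadd (mu p q) (mu p' q).
Proof. by case: morita => _ _ []. Qed.
Lemma mu_addr p q q' : mu p (aadd q q') = aadd (mu p q) (mu p q').
Proof. by case: morita => _ _ [? []]. Qed.
Lemma mu_bal p (b : B) q : mu (bract p b) q = mu p (blact b q).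
Proof. by case: morita => _ _ [? [? []]]. Qed.
Lemma mu_blact (a : A) p q : mu (blact a p) q = rmul a (mu p q).
Proof. by case: morita => _ _ [? [? [? []]]]. Qed.
Lemma mu_bract p q (a : A) : mu p (bract q a) = rmul (mu p q) a.
Proof. by case: morita => _ _ [? [? [? [? []]]]]. Qed.
Lemma mu_comp s t p q : bcomp P s p -> bcomp Q t q -> rcomp (gmul s t) (mu p q).
Proof. by case: morita => _ _ [? [? [? [? [? H]]]]] _ _; apply: H. Qed.
Lemma nu_addl q q' p : nu (aadd q q') p = aadd (nu q p) (nu q' p).
Proof. by case: morita => _ _ _ []. Qed.
Lemma nu_addr q p p' : nu q (aadd p p') = aadd (nu q p) (nu q p').
Proof. by case: morita => _ _ _ [? []]. Qed.
Lemma nu_bal q (a : A) p : nu (bract q a) p = nu q (blact a p).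
Proof. by case: morita => _ _ _ [? [? []]]. Qed.
Lemma nu_blact (b : B) q p : nu (blact b q) p = rmul b (nu q p).
Proof. by case: morita => _ _ _ [? [? [? []]]]. Qed.
Lemma nu_bract q p (b : B) : nu q (bract p b) = rmul (nu q p) b.
Proof. by case: morita => _ _ _ [? [? [? [? []]]]]. Qed.
Lemma nu_comp s t q p : bcomp Q s q -> bcomp P t p -> rcomp (gmul s t) (nu q p).
Proof. by case: morita => _ _ _ [? [? [? [? [? H]]]]] _; apply: H. Qed.
Lemma bract_nu p' q p : bract p' (nu q p) = blact (mu p' q) p.
Proof. by case: morita => _ _ _ _ []. Qed.
Lemma bract_mu q' p q : bract q' (mu p q) = blact (nu q' p) q.
Proof. by case: morita => _ _ _ _ []. Qed.

Lemma mu_additivel q : ladditive (fun p => mu p q). Proof. by move=> ? ?; apply: mu_addl. Qed.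
Lemma mu_additiver p : ladditive (mu p). Proof. by move=> ? ?; apply: mu_addr. Qed.
Lemma nu_additivel p : ladditive (fun q => nu q p). Proof. by move=> ? ?; apply: nu_addl. Qed.
Lemma nu_additiver q : ladditive (nu q). Proof. by move=> ? ?; apply: nu_addr. Qed.

Lemma mu_lhom_deg q t : bcomp Q t q -> lhom_deg (bimod_l P) (lreg A) t (fun p => mu p q).
Proof.
by move=> Hq; split; [|split] => [? ?|? ? /=|? ? Hp];
  [apply: mu_addl | apply: mu_blact | apply: mu_comp].
Qed.
Lemma mu_rhom_deg p t : bcomp P t p -> rhom_deg (bimod_r Q) (rreg A) t (mu p).
Proof.
by move=> Hp; split; [|split] => [? ?|? ? /=|? ? Hq];
  [apply: mu_addr | apply: mu_bract | apply: mu_comp].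
Qed.
Lemma nu_rhom_deg q t : bcomp Q t q -> rhom_deg (bimod_r P) (rreg B) t (nu q).
Proof.
by move=> Hq; split; [|split] => [? ?|? ? /=|? ? Hp];
  [apply: nu_addr | apply: nu_bract | apply: nu_comp].
Qed.

Lemma mu_lHOM q : lHOM (bimod_l P) (lreg A) (fun p => mu p q).
Proof.
have [l [fq [_ Hfq Eq]]] := graded_decomp bimod_graded q.
exists (map (fun c => (c, fun p => mu p (fq c))) l); split.
  by move=> _ /List.in_map_iff [c [<- _]]; apply: mu_lhom_deg.
by apply: functional_extensionality => p; rewrite asum_map Eq (additive_asum (mu_additiver p)).
Qed.
Lemma nu_rHOM q : rHOM (bimod_r P) (rreg B) (nu q).
Proof.
have [l [fq [_ Hfq Eq]]] := graded_decomp bimod_graded q.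
exists (map (fun c => (c, nu (fq c))) l); split.
  by move=> _ /List.in_map_iff [c [<- _]]; apply: nu_rhom_deg.
by apply: functional_extensionality => p; rewrite asum_map Eq (additive_asum (nu_additivel p)).
Qed.

Section MuOnto.
Hypothesis mu_onto : mu_surj mu.

Lemma gr_trace_P (a : A) : in_gr_trace (bimod_l P) a.
Proof.
have [l ->] := mu_onto a; apply: in_gr_trace_asum => -[p q] _ /=.
have [lq [fq [_ Hfq ->]]] := graded_decomp bimod_graded q.
rewrite (additive_asum (mu_additiver p)); apply: in_gr_trace_asum => c _.
exists [:: (p, (c, fun p' => mu p' (fq c)))]; split; last by rewrite /= addx0.
by move=> _ [<-|[]]; apply: mu_lhom_deg.
Qed.

Lemma gr_trace_Q (a : gring_op A) : in_gr_trace (lmod_of_rmod (bimod_r Q)) a.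
Proof.
have [l ->] := mu_onto a; apply: in_gr_trace_asum => -[p q] _ /=.
have [lp [fp [_ Hfp ->]]] := graded_decomp bimod_graded p.
rewrite (additive_asum (mu_additivel q)); apply: in_gr_trace_asum => c _.
exists [:: (q, (c, mu (fp c)))]; split; last by rewrite /= addx0.
move=> _ [<-|[]]; have [h_add [h_bract h_comp]] := mu_rhom_deg (Hfp c).
by split; [|split] => [|b q'|t q' Hq'] /=; [apply: h_add | apply: h_bract | apply: h_comp].
Qed.

Lemma morita_lgenerates : lgenerates (bimod_l P) (lreg A).
Proof. by apply: (gr_trace_full_lgenerates gr_trace_P); apply: morita_idemA. Qed.
Lemma morita_rgenerates : rgenerates (bimod_r Q) (rreg A).
Proof.
apply/rgenerates_op/(gr_trace_full_lgenerates gr_trace_Q).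
exact/(proj1 lmod_of_rmod_unital)/morita_idemA.
Qed.
Lemma morita_lgr_generator : lgr_generator (lquot (bimod_l P)).
Proof. exact: (gr_trace_full_lgr_generator gr_trace_P morita_idemA morita_lunitalP). Qed.
Lemma morita_rgr_generator : rgr_generator (rquot (bimod_r Q)).
Proof.
apply/rgr_generator_op/(gr_trace_full_lgr_generator gr_trace_Q).
  exact/gring_op_idem/morita_idemA.
exact/(proj1 lmod_of_rmod_unital)/morita_runitalQ.
Qed.

(* With a = sum_j <p'_j,q'_j>, balancedness gives
   a p_i (x) q_i = p'_j [q'_j,p_i] (x) q_i = p'_j (x) q'_j <p_i,q_i>,
   which sums to 0 over i; the right action is symmetric. *)
Lemma morita_ker_mu_torsion : ker_mu_torsion mu.
Proof.
move=> l Hl; split=> a Z f HZ f_addl f_addr f_bal; have [la Ea] := mu_onto a; rewrite asum_map /=.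
- have Ef (x : P * Q) : f (blact a x.1) x.2 = asum la (fun y => f y.1 (bract y.2 (mu x.1 x.2))).
    rewrite Ea blact_asuml (additive_asum (f := fun m => f m x.2) (fun m m' => f_addl m m' x.2)).
    by apply: eq_asum => y _; rewrite -bract_nu f_bal -bract_mu.
  rewrite (eq_asum (fun x _ => Ef x)) exchange_asum; apply: asum_eq0 => y _.
  by rewrite -(additive_asum (f_addr y.1)) -bract_asumr Hl bract0r (additive0 (f_addr y.1)).
- have Ef (x : P * Q) : f x.1 (bract x.2 a) = asum la (fun y => f (blact (mu x.1 x.2) y.1) y.2).
    rewrite Ea bract_asumr (additive_asum (f_addr x.1)).
    by apply: eq_asum => y _; rewrite bract_mu -f_bal bract_nu.
  rewrite (eq_asum (fun x _ => Ef x)) exchange_asum; apply: asum_eq0 => y _.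
  have f_add : ladditive (fun m => f m y.2) by move=> m m'; apply: f_addl.
  by rewrite -(additive_asum f_add) -blact_asuml Hl blact0l (additive0 f_add).
Qed.

Lemma nu_ker_rtors q : (fun p => nu q p) = (fun _ => azero) -> rtors (bimod_r Q) q.
Proof.
move=> Eq a; have [l ->] := mu_onto a.
rewrite /= bract_asumr; apply: asum_eq0 => y _.
by rewrite bract_mu (congr1 (fun f => f y.1) Eq) blact0l.
Qed.

(* HOM_B(P,B).A is spanned by the maps p |-> h(a p); writing a = sum_j <p_j,q_j>,
   h(<p_j,q_j> p) = h(p_j [q_j,p]) = h(p_j) [q_j,p] = [h(p_j) q_j, p]. *)
Lemma nu_onto_HOMR F : HOMR (M := P) F -> exists q, nu q = F.
Proof.
move=> [l [Hl ->]].
suff [q Hq] : exists q, forall p, nu q p = asum l (fun x => x.1 (blact x.2 p)).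
  by exists q; apply: functional_extensionality.
elim: l Hl => [|[h a] l IH] Hl; first by exists azero => p; apply: (additive0 (nu_additivel p)).
have [q Hq] := IH (fun y Hy => Hl y (or_intror Hy)).
have /= [h_add h_bract] := rHOM_linear (Hl (h, a) (or_introl erefl)).
have [la Ea] := mu_onto a.
exists (aadd (asum la (fun y => blact (h y.1) y.2)) q) => p.
rewrite nu_addl Hq; congr aadd.
rewrite Ea blact_asuml (additive_asum h_add) (additive_asum (nu_additivel p)).
by apply: eq_asum => y _; rewrite nu_blact -bract_nu h_bract.
Qed.

Lemma nu_HOMR_epi : HOMR_epi (fun q p => nu q p).
Proof.
split.
- move=> q; have [l Eq] := morita_runitalQ q.
  exists (map (fun x => (nu x.1, x.2)) l); split.
    by move=> _ /List.in_map_iff [y [<- _]]; apply: nu_rHOM.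
  apply: functional_extensionality => p.
  by rewrite asum_map Eq (additive_asum (nu_additivel p)); apply: eq_asum => y _; rewrite /= nu_bal.
- exact: nu_onto_HOMR.
- by move=> q q'; apply: functional_extensionality => p; apply: nu_addl.
- by split=> [b q|q a]; apply: functional_extensionality => p; rewrite ?nu_blact ?nu_bal.
- by move=> t q Hq; apply: nu_rhom_deg.
Qed.

Lemma nu_HOMR_iso : rtfree (bimod_r Q) -> HOMR_iso (fun q p => nu q p).
Proof.
move=> Q_tfree; split; first exact: nu_HOMR_epi.
split=> [q q' Eqq'|t F HF [_ [_ F_comp]]].
  apply: sub0_eq; apply: Q_tfree; apply: nu_ker_rtors.
  apply: functional_extensionality => p.
  by rewrite nu_addl (additiveN (nu_additivel p)) (congr1 (fun f => f p) Eqq') addxN.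
have [q EF] := nu_onto_HOMR HF; subst F.
have [lq [fq [ND Ht Hfq Eq]]] := graded_decomp_at bimod_graded q t.
exists (fq t); split=> //; apply: functional_extensionality => p.
have [lp [fp [_ Hfp ->]]] := graded_decomp bimod_graded p.
rewrite !(additive_asum (nu_additiver _)); apply: eq_asum => u _.
apply: (additive_component gring_graded (gmulgK u) (gmulgKV u) (nu_additivel (fp u))
  _ ND Ht Hfq Eq) => [c q' Hq'|]; first exact: nu_comp.
exact: (F_comp _ _ (Hfp u)).
Qed.
End MuOnto.

Section NuOnto.
Hypothesis nu_onto : nu_surj nu.

Lemma mu_ker_ltors q : (fun p => mu p q) = (fun _ => azero) -> ltors (bimod_l Q) q.
Proof.
move=> Eq b; have [l ->] := nu_onto b.
rewrite /= blact_asuml; apply: asum_eq0 => y _.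
by rewrite -bract_mu (congr1 (fun f => f y.2) Eq) bract0r.
Qed.

Lemma mu_onto_SHOM F : SHOM (M := P) F -> exists q, (fun p => mu p q) = F.
Proof.
move=> [l [Hl ->]].
suff [q Hq] : exists q, forall p, mu p q = asum l (fun x => x.2 (bract p x.1)).
  by exists q; apply: functional_extensionality.
elim: l Hl => [|[b h] l IH] Hl; first by exists azero => p; apply: (additive0 (mu_additiver p)).
have [q Hq] := IH (fun y Hy => Hl y (or_intror Hy)).
have /= [h_add h_blact] := lHOM_linear (Hl (b, h) (or_introl erefl)).
have [lb Eb] := nu_onto b.
exists (aadd (asum lb (fun y => bract y.1 (h y.2))) q) => p.
rewrite mu_addr Hq; congr aadd.
rewrite Eb bract_asumr (additive_asum h_add) (additive_asum (mu_additiver p)).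
by apply: eq_asum => y _; rewrite mu_bract bract_nu h_blact.
Qed.

Lemma mu_SHOM_epi : SHOM_epi (fun q p => mu p q).
Proof.
split.
- move=> q; have [l Eq] := morita_lunitalQ q.
  exists (map (fun x => (x.1, fun p => mu p x.2)) l); split.
    by move=> _ /List.in_map_iff [y [<- _]]; apply: mu_lHOM.
  apply: functional_extensionality => p.
  by rewrite asum_map Eq (additive_asum (mu_additiver p)); apply: eq_asum => y _; rewrite /= mu_bal.
- exact: mu_onto_SHOM.
- by move=> q q'; apply: functional_extensionality => p; apply: mu_addr.
- by split=> [b q|q a]; apply: functional_extensionality => p; rewrite ?mu_bal ?mu_bract.
- by move=> t q Hq; apply: mu_lhom_deg.
Qed.

Lemma mu_SHOM_iso : ltfree (bimod_l Q) -> SHOM_iso (fun q p => mu p q).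
Proof.
move=> Q_tfree; split; first exact: mu_SHOM_epi.
split=> [q q' Eqq'|t F HF [_ [_ F_comp]]].
  apply: sub0_eq; apply: Q_tfree; apply: mu_ker_ltors.
  apply: functional_extensionality => p.
  by rewrite mu_addr (additiveN (mu_additiver p)) (congr1 (fun f => f p) Eqq') addxN.
have [q EF] := mu_onto_SHOM HF; subst F.
have [lq [fq [ND Ht Hfq Eq]]] := graded_decomp_at bimod_graded q t.
exists (fq t); split=> //; apply: functional_extensionality => p.
have [lp [fp [_ Hfp ->]]] := graded_decomp bimod_graded p.
rewrite !(additive_asum (mu_additivel _)); apply: eq_asum => u _.
apply: (additive_component gring_graded (gmulKg u) (gmulKVg u) (mu_additiver (fp u))
  _ ND Ht Hfq Eq) => [c q' Hq'|]; first exact: mu_comp.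
exact: (F_comp _ _ (Hfp u)).
Qed.
End NuOnto.
End MoritaContext.

Lemma is_gmorita_swap {G : group} {A B : gring G} {P : bimod A B} {Q : bimod B A}
  (mu : P -> Q -> A) (nu : Q -> P -> B) : is_gmorita mu nu -> is_gmorita nu mu.
Proof. by case=> [[? [? [? ?]]]] [? [? [? [? [? ?]]]]] ? ? [? ?]. Qed.

Lemma gmorita_nondegenerate {G : group} {A B : gring G} {P : bimod A B} {Q : bimod B A}
    (mu : P -> Q -> A) (nu : Q -> P -> B) :
  is_gmorita mu nu -> mu_surj mu -> nu_surj nu ->
  ltfree (bimod_l P) -> rtfree (bimod_r P) -> ltfree (bimod_l Q) -> rtfree (bimod_r Q) ->
  nondegenerate mu nu.
Proof.
move=> morita mu_onto nu_onto Pl_tfree Pr_tfree Ql_tfree Qr_tfree.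
have morita' := is_gmorita_swap morita.
split; [by do !split | move=> q Hq | move=> p Hp | move=> p Hp | move=> q Hq].
- by apply/Ql_tfree/(mu_ker_ltors morita nu_onto)/functional_extensionality.
- by apply/Pr_tfree/(nu_ker_rtors morita' nu_onto)/functional_extensionality.
- by apply/Pl_tfree/(mu_ker_ltors morita' mu_onto)/functional_extensionality.
- by apply/Qr_tfree/(nu_ker_rtors morita mu_onto)/functional_extensionality.
Qed.

Unset Implicit Arguments.
Theorem proposition5p1 (G : group) (A B : gring G) (P : bimod A B) (Q : bimod B A)
    (mu : P -> Q -> A) (nu : Q -> P -> B) :
  is_gmorita mu nu -> mu_surj mu -> nu_surj nu ->
  [/\ (* (1) *)
      (lgenerates (bimod_l P) (lreg A) /\ lgenerates (bimod_l Q) (lreg B) /\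
       rgenerates (bimod_r Q) (rreg A) /\ rgenerates (bimod_r P) (rreg B)) /\
      (lgr_generator (lquot (bimod_l P)) /\ lgr_generator (lquot (bimod_l Q)) /\
       rgr_generator (rquot (bimod_r P)) /\ rgr_generator (rquot (bimod_r Q))),
      (* (2) *)
      ker_mu_torsion mu /\ ker_nu_torsion nu,
      (* (3) *)
      (SHOM_epi (fun q p => mu p q) /\
         forall q, (fun p => mu p q) = (fun _ => azero) -> ltors (bimod_l Q) q) /\
      (HOMR_epi (fun q p => nu q p) /\
         forall q, (fun p => nu q p) = (fun _ => azero) -> rtors (bimod_r Q) q) /\
      (SHOM_epi (fun p q => nu q p) /\
         forall p, (fun q => nu q p) = (fun _ => azero) -> ltors (bimod_l P) p) /\
      (HOMR_epi (fun p q => mu p q) /\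
         forall p, (fun q => mu p q) = (fun _ => azero) -> rtors (bimod_r P) p)
    & (* (4) and (5) under torsion-freeness *)
      (ltfree (lreg A) /\ rtfree (rreg A) /\ ltfree (lreg B) /\ rtfree (rreg B) /\
       ltfree (bimod_l P) /\ rtfree (bimod_r P) /\
       ltfree (bimod_l Q) /\ rtfree (bimod_r Q)) ->
      ((exists phi : Q -> P -> A, SHOM_iso phi) /\
       (exists phi : Q -> P -> B, HOMR_iso phi) /\
       (exists phi : P -> Q -> B, SHOM_iso phi) /\
       (exists phi : P -> Q -> A, HOMR_iso phi)) /\
      nondegenerate mu nu ].
Proof.
move=> HM mu_onto nu_onto; have HM' := is_gmorita_swap HM.
split.
- split.
    exact: (conj (morita_lgenerates HM mu_onto) (conj (morita_lgenerates HM' nu_onto)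
      (conj (morita_rgenerates HM mu_onto) (morita_rgenerates HM' nu_onto)))).
  exact: (conj (morita_lgr_generator HM mu_onto) (conj (morita_lgr_generator HM' nu_onto)
    (conj (morita_rgr_generator HM' nu_onto) (morita_rgr_generator HM mu_onto)))).
- exact: (conj (morita_ker_mu_torsion HM mu_onto) (morita_ker_mu_torsion HM' nu_onto)).
- split; first exact: (conj (mu_SHOM_epi HM nu_onto) (mu_ker_ltors HM nu_onto)).
  split; first exact: (conj (nu_HOMR_epi HM mu_onto) (nu_ker_rtors HM mu_onto)).
  split; first exact: (conj (mu_SHOM_epi HM' mu_onto) (mu_ker_ltors HM' mu_onto)).
  exact: (conj (nu_HOMR_epi HM' nu_onto) (nu_ker_rtors HM' nu_onto)).
- move=> [_ [_ [_ [_ [Pl_tfree [Pr_tfree [Ql_tfree Qr_tfree]]]]]]].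
  split; last exact: gmorita_nondegenerate.
  split; first by eexists; apply: (mu_SHOM_iso HM nu_onto Ql_tfree).
  split; first by eexists; apply: (nu_HOMR_iso HM mu_onto Qr_tfree).
  split; first by eexists; apply: (mu_SHOM_iso HM' mu_onto Pl_tfree).
  by eexists; apply: (nu_HOMR_iso HM' nu_onto Pr_tfree).
Qed.
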